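(* Let $T=(V,E)$ be a tree rooted at $o$ with edge lengths $\ell:E\to\mathbb{R}_{>0}$ and let $F>0$. For any $X_1,X_2,X_3,X_4\subseteq V$, $$\mathrm{cost}(X_1\cup X_2\mid X_3)\le \mathrm{cost}(X_1)+\mathrm{cost}(X_2\mid X_3),$$ $$\mathrm{cost}(X_2\cup X_3)+\mathrm{cost}(X_1\mid X_2\cup X_3)+\mathrm{cost}(X_4\mid X_2\cup X_3)\le \mathrm{cost}(X_1\cup X_2)+\mathrm{cost}(X_3\cup X_4).$$
   Context: $V_v$ is the set of descendants of $v$ in $T$ (including $v$); for an edge $e=(u,v)$ with $v$ the child, $V_e=V_v$. For $X\subseteq V$, $\mathrm{mst}(X)$ is the total length of the minimal subtree of $T$ containing $X\cup\{o\}$, and $\mathrm{mst}_e(X)=\mathrm{mst}(V_e\cap X)$. $c(X,e)=\lceil \mathrm{mst}_e(X)/F\rceil$ for $e\in E$, $\mathrm{cost}(X)=2\sum_{e\in E}c(X,e)\ell(e)$. For $X,X'\subseteq V$ and $e\in E$: $c(X,e\mid X')=\lceil \mathrm{mst}_e(X)/F\rceil$ if $V_e\cap X'=\emptyset$, and $c(X,e\mid X')=\lfloor(\mathrm{mst}_e(X'\cup X)-\mathrm{mst}_e(X'))/F\rfloor$ otherwise; $\mathrm{cost}(X\mid X')=2\sum_{e\in E}c(X,e\mid X')\ell(e)$. *)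

From HB Require Import structures.
From mathcomp Require Import all_boot all_order all_algebra.
From mathcomp Require Import reals.
Set Implicit Arguments. Unset Strict Implicit. Unset Printing Implicit Defensive.
Import Order.TTheory GRing.Theory Num.Theory.
Local Open Scope ring_scope.

(* A finite rooted tree on vertex set T with root o, given by a parent map:
   every non-root vertex v has parent (parent v); the edges are the pairs
   (parent v, v) for v != o, so edges are identified with their child vertex. *)
Definition rooted_tree (T : finType) (o : T) (parent : T -> T) : Prop :=
  parent o = o /\ forall v : T, exists k : nat, iter k parent v = o.

Section Cost.
Variables (R : realType) (T : finType) (o : T) (parent : T -> T).
Variables (len : T -> R) (F : R).

(* x is a descendant of v (including v itself): v is an ancestor of x.
   (Ancestors of x are reached within #|T| parent steps.) *)
Definition desc (v x : T) : bool :=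
  [exists k : 'I_#|T|.+1, iter k parent x == v].

(* V_v, the set of descendants of v; for the edge e = (parent v, v), V_e = V_v *)
Definition Vsub (v : T) : {set T} := [set x | desc v x].

(* mst X : total length of the minimal subtree containing X ∪ {o}, i.e. of
   the union of the root paths of the vertices of X: the edge (parent v, v)
   lies on the root path of x iff x is a descendant of v. *)
Definition mst (X : {set T}) : R :=
  \sum_(v | (v != o) && [exists x in X, desc v x]) len v.

Definition mst_e (X : {set T}) (v : T) : R := mst (Vsub v :&: X).

Definition c (X : {set T}) (v : T) : int := Num.ceil (mst_e X v / F).

Definition cost (X : {set T}) : R :=
  2 * \sum_(v | v != o) (c X v)%:~R * len v.

Definition c_cond (X X' : {set T}) (v : T) : int :=
  if Vsub v :&: X' == set0 then Num.ceil (mst_e X v / F)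
  else Num.floor ((mst_e (X' :|: X) v - mst_e X' v) / F).

Definition cost_cond (X X' : {set T}) : R :=
  2 * \sum_(v | v != o) (c_cond X X' v)%:~R * len v.

End Cost.

(* For each edge e, X |-> mst_e(X) is a nonnegatively weighted coverage function
   (an edge of V_e is counted as soon as some vertex of X lies below it), hence
   monotone, subadditive and submodular.  Both costs are l-weighted sums of
   per-edge integers, so it suffices to compare the integer coefficients edge by
   edge; there the inequalities follow from the coverage properties together with
   ceil x < x + 1 and floor x <= x, by cases on whether V_e meets the conditioning
   set. *)

From Pilot Require Import Defs.
From HB Require Import structures.
From mathcomp Require Import all_boot all_order all_algebra.
From mathcomp Require Import reals.
From mathcomp Require Import lra.
Set Implicit Arguments.
Unset Strict Implicit.
Import Order.TTheory GRing.Theory Num.Theory.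
Local Open Scope ring_scope.

Section Rounding.
Variable R : archiRealDomainType.

Lemma ltr_intD1 (m n : int) : (m%:~R : R) < n%:~R + 1 -> m <= n.
Proof. by move=> lt_mn; rewrite -ltzD1 -(ltr_int R) intrD. Qed.

Lemma ceil_lt_addr1 (x : R) : (Num.ceil x)%:~R < x + 1.
Proof. by have := ceilB1_lt x; rewrite intrB; lra. Qed.

Lemma ceil_le_ceilD (x y z : R) :
  x <= y + z -> Num.ceil x <= Num.ceil y + Num.ceil z.
Proof.
move=> le_x_yz; apply: ltr_intD1; rewrite intrD.
by have := ceil_lt_addr1 x; have := ceil_ge y; have := ceil_ge z; lra.
Qed.

Lemma floor_le_ceilD_floor (x y z : R) :
  x <= y + z -> Num.floor x <= Num.ceil y + Num.floor z.
Proof.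
move=> le_x_yz; apply: ltr_intD1; rewrite intrD.
have := floor_le x; have := ceil_ge y; have := floorD1_gt z.
by rewrite intrD; lra.
Qed.

Lemma ceil_floorD_le_ceilD (x y z u w : R) : x + y + z <= u + w ->
  Num.ceil x + Num.floor y + Num.floor z <= Num.ceil u + Num.ceil w.
Proof.
move=> le_xyz_uw; apply: ltr_intD1; rewrite !intrD.
have := ceil_lt_addr1 x; have := floor_le y; have := floor_le z.
by have := ceil_ge u; have := ceil_ge w; lra.
Qed.

End Rounding.

Section Coverage.
Variables (R : realType) (T : finType) (o : T) (parent : T -> T) (len : T -> R).
Hypothesis len_ge0 : forall v, v != o -> 0 <= len v.
Implicit Types A B X Y : {set T}.

Local Notation covers X v := [exists x in X, desc parent v x].
Local Notation mst := (mst o parent len).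
Local Notation mst_e := (mst_e o parent len).

Lemma mstE X : mst X = \sum_(v | v != o) (if covers X v then len v else 0).
Proof. by rewrite /Defs.mst big_mkcondr. Qed.

Lemma covers_setU A B v : covers (A :|: B) v = covers A v || covers B v.
Proof.
apply/existsP/orP => [[x /andP[]]|].
  by rewrite inE => /orP[] xAB desc_vx; [left | right]; apply/existsP; exists x;
    rewrite xAB.
by case=> /existsP[x /andP[xAB desc_vx]]; exists x; rewrite inE xAB ?orbT.
Qed.

Lemma covers_subset {A B v} : A \subset B -> covers A v -> covers B v.
Proof.
by move=> /subsetP sAB /existsP[x /andP[xA desc_vx]]; apply/existsP; exists x;
  rewrite sAB.
Qed.

Lemma mst_ge0 A : 0 <= mst A.
Proof.
by rewrite mstE; apply: sumr_ge0 => v vo; case: ifP => // _; apply: len_ge0.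
Qed.

Lemma mst_set0 : mst set0 = 0.
Proof.
by rewrite mstE big1 // => v _; case: ifP => // /existsP[x]; rewrite inE.
Qed.

Lemma subset_le_mst A B : A \subset B -> mst A <= mst B.
Proof.
move=> sAB; rewrite !mstE; apply: ler_sum => v vo.
case: ifP => [/(covers_subset sAB) -> // | _]; case: ifP => // _; exact: len_ge0.
Qed.

Lemma mstUI_le A B : mst (A :|: B) + mst (A :&: B) <= mst A + mst B.
Proof.
rewrite !mstE -!big_split /=; apply: ler_sum => v vo; rewrite covers_setU.
have coversI : covers (A :&: B) v -> covers A v && covers B v.
  by move=> cI; rewrite (covers_subset (subsetIl A B) cI)
                       (covers_subset (subsetIr A B) cI).
have := len_ge0 vo; move: coversI.
case: (covers (A :&: B) v) => [/(_ isT)/andP[-> ->] /= | _]; first by lra.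
by case: (covers A v); case: (covers B v) => /=; lra.
Qed.

Lemma le_mst_setU A B : mst (A :|: B) <= mst A + mst B.
Proof. by have := mstUI_le A B; have := mst_ge0 (A :&: B); lra. Qed.

Lemma subset_le_mst_e v A B : A \subset B -> mst_e A v <= mst_e B v.
Proof. by move=> sAB; apply: subset_le_mst; apply: setIS. Qed.

Lemma le_mst_e_setU v A B : mst_e (A :|: B) v <= mst_e A v + mst_e B v.
Proof. by rewrite /Defs.mst_e setIUr; apply: le_mst_setU. Qed.

Lemma mst_e_diminishing v A B Y : B \subset Y ->
  mst_e (Y :|: A) v - mst_e Y v <= mst_e (B :|: A) v - mst_e B v.
Proof.
move=> sBY; set V := Vsub parent v.
have := mstUI_le (V :&: (B :|: A)) (V :&: Y).
have sB : V :&: B \subset (V :&: (B :|: A)) :&: (V :&: Y).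
  by rewrite -setIIr setIS // subsetI subsetUl.
have := subset_le_mst sB; rewrite -setIUr setUAC (setUidPr sBY).
by rewrite /Defs.mst_e; lra.
Qed.

Lemma mst_e_eq0 v A : Vsub parent v :&: A = set0 -> mst_e A v = 0.
Proof. by rewrite /Defs.mst_e => ->; apply: mst_set0. Qed.

End Coverage.

Section EdgeCosts.
Variables (R : realType) (T : finType) (o : T) (parent : T -> T).
Variables (len : T -> R) (F : R).
Hypotheses (len_ge0 : forall v, v != o -> 0 <= len v) (F_gt0 : 0 < F).
Implicit Types X Y : {set T}.

Local Notation c := (c o parent len F).
Local Notation c_cond := (c_cond o parent len F).

Definition edge_cost (k : T -> int) : R :=
  2 * \sum_(v | v != o) (k v)%:~R * len v.

Lemma costE X : cost o parent len F X = edge_cost (c X).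
Proof. by []. Qed.

Lemma cost_condE X Y : cost_cond o parent len F X Y = edge_cost (c_cond X Y).
Proof. by []. Qed.

Lemma edge_costD k1 k2 :
  edge_cost k1 + edge_cost k2 = edge_cost (fun v => k1 v + k2 v).
Proof.
rewrite /edge_cost -mulrDr -big_split; congr (2 * _).
by apply: eq_bigr => v _; rewrite intrD mulrDl.
Qed.

Lemma ler_edge_cost k1 k2 :
  (forall v, v != o -> k1 v <= k2 v) -> edge_cost k1 <= edge_cost k2.
Proof.
move=> le_k12; rewrite ler_pM2l //; apply: ler_sum => v vo.
by apply: ler_wpM2r; [apply: len_ge0 | rewrite ler_int le_k12].
Qed.

Lemma c_cond_setU_le v X1 X2 X3 :
  c_cond (X1 :|: X2) X3 v <= c X1 v + c_cond X2 X3 v.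
Proof.
rewrite /Defs.c_cond /Defs.c; case: ifP => _.
  apply: ceil_le_ceilD; rewrite -mulrDl ler_pM2r ?invr_gt0 //.
  exact: le_mst_e_setU.
apply: floor_le_ceilD_floor; rewrite -mulrDl ler_pM2r ?invr_gt0 //.
by have := le_mst_e_setU parent len_ge0 v X1 (X3 :|: X2); rewrite setUCA; lra.
Qed.

Lemma c_setU_cond_le v X1 X2 X3 X4 :
  c (X2 :|: X3) v + c_cond X1 (X2 :|: X3) v + c_cond X4 (X2 :|: X3) v
    <= c (X1 :|: X2) v + c (X3 :|: X4) v.
Proof.
rewrite /Defs.c_cond /Defs.c; case: ifP => /eqP disjV.
  rewrite mst_e_eq0 // mul0r ceil0 add0r.
  by apply: lerD; apply: le_ceil; rewrite ler_pM2r ?invr_gt0 //;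
    apply: subset_le_mst_e; rewrite ?subsetUl ?subsetUr.
apply: ceil_floorD_le_ceilD; rewrite -!mulrDl ler_pM2r ?invr_gt0 //.
have := mst_e_diminishing parent len_ge0 v X1 (subsetUl X2 X3).
have := mst_e_diminishing parent len_ge0 v X4 (subsetUr X2 X3).
by have := le_mst_e_setU parent len_ge0 v X2 X3; rewrite [X2 :|: X1]setUC; lra.
Qed.

End EdgeCosts.

Theorem lemma4p3 (R : realType) (T : finType) (o : T) (parent : T -> T)
  (len : T -> R) (F : R)
  (Htree : rooted_tree o parent)
  (Hlen : forall v : T, v != o -> 0 < len v)
  (HF : 0 < F)
  (X1 X2 X3 X4 : {set T}) :
  cost_cond o parent len F (X1 :|: X2) X3
    <= cost o parent len F X1 + cost_cond o parent len F X2 X3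
  /\
  cost o parent len F (X2 :|: X3)
    + cost_cond o parent len F X1 (X2 :|: X3)
    + cost_cond o parent len F X4 (X2 :|: X3)
    <= cost o parent len F (X1 :|: X2) + cost o parent len F (X3 :|: X4).
Proof.
have len_ge0 v : v != o -> 0 <= len v by move/Hlen/ltW.
split.
- rewrite costE !cost_condE edge_costD; apply: (ler_edge_cost len_ge0) => v _.
  exact: (c_cond_setU_le parent len_ge0 HF v X1 X2 X3).
- rewrite !costE !cost_condE !edge_costD; apply: (ler_edge_cost len_ge0) => v _.
  exact: (c_setU_cond_le parent len_ge0 HF v X1 X2 X3 X4).
Qed.
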